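(* Fix a UL-chain $\mathbf{A}$ and a predicate language $\mathcal{P}$, and let $\mathscr{K}$ be a countable class of finitely generated $\mathbf{A}$-structures for $\mathcal{P}$ (classes being considered up to isomorphism). Then $\mathscr{K}=\mathrm{Age}(\mathbf{A},\mathbf{N})$ for some $\mathbf{A}$-structure $\langle \mathbf{A},\mathbf{N}\rangle$ if and only if $\mathscr{K}$ satisfies the hereditary property (HP) and the joint embedding property (JEP). Furthermore, if $\mathscr{K}$ is a class of $\mathbf{A}$-structures for $\mathcal{P}$ of arbitrary cardinality which satisfies HP and JEP and is closed under unions of chains, then $\mathscr{K}=\mathrm{Age}(\mathbf{A},\mathbf{N})$ for some $\mathbf{A}$-structure $\langle\mathbf{A},\mathbf{N}\rangle$.
   Context: A UL-algebra is a structure $\mathbf{A}=\langle A,\wedge,\vee,\&,\to,\bar 0,\bar 1,\bot,\top\rangle$ such that $\langle A,\wedge,\vee,\bot,\top\rangle$ is a bounded lattice, $\langle A,\&,\bar 1\rangle$ is a commutative monoid, $a\& b\le c$ iff $b\le a\to c$ for all $a,b,c$, and $((a\to b)\wedge\bar 1)\vee((b\to a)\wedge \bar 1)=\bar 1$ for all $a,b$. A UL-chain is a UL-algebra whose lattice order is linear. A predicate language $\mathcal{P}$ consists of predicate symbols and function symbols, each with an arity. An $\mathbf{A}$-structure $\langle\mathbf{A},\mathbf{M}\rangle$ consists of a set $M$, a function $P_{\mathbf{M}}:M^n\to A$ for each $n$-ary predicate symbol $P$, and a function $F_{\mathbf{M}}:M^n\to M$ for each $n$-ary function symbol $F$. Terms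 are evaluated as usual; the truth value of an atomic formula $P(t_1,\dots,t_n)$ is $P_{\mathbf{M}}$ applied to the values of the terms, and quantifier-free formulas (built with the connectives $\wedge,\vee,\&,\to,\bar0,\bar1,\bot,\top$) are evaluated by the corresponding operations of $\mathbf{A}$; $\|\varphi(\vec d)\|^{\mathbf{A}}_{\mathbf{M}}$ denotes this value. $\langle\mathbf{A},\mathbf{M}\rangle$ is a substructure of $\langle\mathbf{A},\mathbf{N}\rangle$ if $M\subseteq N$, $F_{\mathbf{M}}=F_{\mathbf{N}}$ on tuples from $M$ for every function symbol, and every quantifier-free formula has the same value in both structures on every tuple from $M$. An embedding $\langle Id,f\rangle$ of $\langle\mathbf{A},\mathbf{M}\rangle$ into $\langle\mathbf{A},\mathbf{N}\rangle$ is an injective map $f:M\to N$ commuting with all function symbols and preserving the value of every quantifier-free formula (the map on $\mathbf{A}$ is the identity); an isomorphism is a surjective embedding. A structure is finitely generated if its universe is generated by a finite subset under the function symbols. A chain is a sequence of structures each a substructure of the later ones; its union has as universe the union of the universes with the relations and functions inherited. The age $\mathrm{Age}(\mathbf{A},\mathbf{N})$ is the class of all finitely generated substructures of $\langle\mathbf{A},\mathbf{N}\rangle$ and their isomorphic copies (taken up to isomorphism). $\mathscr{K}$ has HP if it is closed under taking substructures; it has JEP if any two members of $\mathscr{K}$ both embed into some common member of $\mathscr{K}$. *)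

From Stdlib Require List.
From mathcomp Require Import all_boot.
Set Implicit Arguments.
Unset Strict Implicit.
Unset Printing Implicit Defensive.

Record ULChain := MkULChain {
  ul_car :> Type;
  ul_meet : ul_car -> ul_car -> ul_car;
  ul_join : ul_car -> ul_car -> ul_car;
  ul_mul  : ul_car -> ul_car -> ul_car;
  ul_imp  : ul_car -> ul_car -> ul_car;
  ul_0 : ul_car;
  ul_1 : ul_car;
  ul_bot : ul_car;
  ul_top : ul_car;
  (* bounded lattice; order: a <= b iff a /\ b = a *)
  ul_meetA : forall a b c, ul_meet a (ul_meet b c) = ul_meet (ul_meet a b) c;
  ul_meetC : forall a b, ul_meet a b = ul_meet b a;
  ul_joinA : forall a b c, ul_join a (ul_join b c) = ul_join (ul_join a b) c;
  ul_joinC : forall a b, ul_join a b = ul_join b a;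
  ul_meet_absorb : forall a b, ul_meet a (ul_join a b) = a;
  ul_join_absorb : forall a b, ul_join a (ul_meet a b) = a;
  ul_botP : forall a, ul_meet ul_bot a = ul_bot;
  ul_topP : forall a, ul_meet a ul_top = a;
  ul_mulA : forall a b c, ul_mul a (ul_mul b c) = ul_mul (ul_mul a b) c;
  ul_mulC : forall a b, ul_mul a b = ul_mul b a;
  ul_mul1 : forall a, ul_mul ul_1 a = a;
  ul_residuation : forall a b c,
      ul_meet (ul_mul a b) c = ul_mul a b <-> ul_meet b (ul_imp a c) = b;
  ul_prelin : forall a b,
      ul_join (ul_meet (ul_imp a b) ul_1) (ul_meet (ul_imp b a) ul_1) = ul_1;
  ul_linear : forall a b, ul_meet a b = a \/ ul_meet b a = b
}.

Record Lang := MkLang {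
  psym : Type; parity : psym -> nat;
  fsym : Type; farity : fsym -> nat
}.

Section Structures.
Variables (A : ULChain) (L : Lang).

Record Struc := MkStruc {
  dom : Type;
  pint : forall P : psym L, ('I_(parity P) -> dom) -> ul_car A;
  fint : forall F : fsym L, ('I_(farity F) -> dom) -> dom
}.
Arguments pint : clear implicits.
Arguments fint : clear implicits.

Inductive term (V : Type) : Type :=
| tvar : V -> term V
| tapp (F : fsym L) : ('I_(farity F) -> term V) -> term V.

Inductive qf (V : Type) : Type :=
| fatom (P : psym L) : ('I_(parity P) -> term V) -> qf V
| fmeet : qf V -> qf V -> qf V
| fjoin : qf V -> qf V -> qf V
| fmul  : qf V -> qf V -> qf V
| fimp  : qf V -> qf V -> qf V
| fzero : qf V | fone : qf V | fbot : qf V | ftop : qf V.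

Fixpoint teval (M : Struc) (V : Type) (d : V -> dom M) (t : term V) : dom M :=
  match t with
  | tvar x => d x
  | tapp F args => fint M F (fun i => @teval M V d (args i))
  end.

Fixpoint feval (M : Struc) (V : Type) (d : V -> dom M) (phi : qf V) : ul_car A :=
  match phi with
  | fatom P args => pint M P (fun i => @teval M V d (args i))
  | fmeet p q => @ul_meet A (@feval M V d p) (@feval M V d q)
  | fjoin p q => @ul_join A (@feval M V d p) (@feval M V d q)
  | fmul p q => @ul_mul A (@feval M V d p) (@feval M V d q)
  | fimp p q => @ul_imp A (@feval M V d p) (@feval M V d q)
  | fzero => @ul_0 A | fone => @ul_1 A | fbot => @ul_bot A | ftop => @ul_top A
  end.

(* embeddings <Id, f> and isomorphisms; ||phi(d)|| for tuples d : 'I_n -> M *)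
Definition embedding (M N : Struc) (f : dom M -> dom N) : Prop :=
  injective f /\
  (forall F args, f (fint M F args) = fint N F (fun i => f (args i))) /\
  (forall (n : nat) (phi : qf 'I_n) (d : 'I_n -> dom M),
      @feval N 'I_n (fun i => f (d i)) phi = @feval M 'I_n d phi).

Definition embeds (M N : Struc) : Prop := exists f, @embedding M N f.

Definition isomorphic (M N : Struc) : Prop :=
  exists f, @embedding M N f /\ (forall y, exists x, f x = y).

Record subuniverse (N : Struc) := MkSub {
  sub_mem : dom N -> Prop;
  sub_closed : forall F (args : 'I_(farity F) -> dom N),
      (forall i, sub_mem (args i)) -> sub_mem (fint N F args)
}.

Definition induced (N : Struc) (S : subuniverse N) : Struc :=
  {| dom := {x : dom N | sub_mem S x};
     pint := fun P a => pint N P (fun i => proj1_sig (a i));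
     fint := fun F a => exist _ (fint N F (fun i => proj1_sig (a i)))
                          (@sub_closed N S F (fun i => proj1_sig (a i)) (fun i => proj2_sig (a i))) |}.

Definition generated (M : Struc) (X : dom M -> Prop) (x : dom M) : Prop :=
  forall S : dom M -> Prop,
    (forall F (args : 'I_(farity F) -> dom M),
        (forall i, S (args i)) -> S (fint M F args)) ->
    (forall y, X y -> S y) -> S x.

Definition fin_gen (M : Struc) : Prop :=
  exists l : list (dom M), forall x, generated (fun y => List.In y l) x.

Definition in_class (K : Struc -> Prop) (B : Struc) : Prop :=
  exists C, K C /\ isomorphic B C.

Definition same_class (K1 K2 : Struc -> Prop) : Prop :=
  (forall B, K1 B -> in_class K2 B) /\ (forall B, K2 B -> in_class K1 B).

Definition Age (N : Struc) (B : Struc) : Prop :=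
  exists S : subuniverse N, fin_gen (induced S) /\ isomorphic B (induced S).

(* HP (for finitely generated substructures, as in Hodges) *)
Definition HP (K : Struc -> Prop) : Prop :=
  forall B, K B -> forall S : subuniverse B, fin_gen (induced S) ->
    in_class K (induced S).

Definition JEP (K : Struc -> Prop) : Prop :=
  forall B C, K B -> K C -> exists D, K D /\ embeds B D /\ embeds C D.

Definition countable_class (K : Struc -> Prop) : Prop :=
  exists e : nat -> Struc, forall B, K B -> exists n, isomorphic B (e n).

Definition union_closed (K : Struc -> Prop) : Prop :=
  forall (U : Struc) (I : Type) (S : I -> subuniverse U),
    inhabited I ->
    (forall i j, (forall x, sub_mem (S i) x -> sub_mem (S j) x) \/
                 (forall x, sub_mem (S j) x -> sub_mem (S i) x)) ->
    (forall x, exists i, sub_mem (S i) x) ->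
    (forall i, in_class K (induced (S i))) ->
    in_class K U.

End Structures.

From Pilot Require Import Defs.
From mathcomp Require Import all_boot.
From Stdlib Require Import ClassicalEpsilon ProofIrrelevance Classical.
From Stdlib Require Import FunctionalExtensionality PropExtensionality.
From Stdlib Require List FinFun Eqdep_dec.
Set Implicit Arguments.
Unset Strict Implicit.
Unset Printing Implicit Defensive.

(* The age of N consists, up to isomorphism, of the finitely generated
   structures that embed into N. Hence it has HP, and two of its members embed
   jointly into the substructure of N generated by their images (JEP).
   Conversely, if K has HP and JEP and C_0, C_1, ... enumerate its isomorphism
   types, JEP yields a chain D_0 -> D_1 -> ... in K with C_n embedded in D_(n+1).
   Each C_n embeds in the direct limit, and every finitely generated
   substructure of the limit already lies in some D_n, hence is in K by HP.
   Without countability but with closure under unions: either some U in K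
   embeds every member of K, and then Age U = K, or JEP yields a chain in K of
   non-surjective embeddings. Its union is in K, hence finitely generated, so
   it lies in one stage D_m, which makes D_m -> D_(m+1) surjective. *)

Lemma sig_eq (T : Type) (P : T -> Prop) (x y : sig P) :
  proj1_sig x = proj1_sig y -> x = y.
Proof. by apply: eq_sig_hprop => a; exact: proof_irrelevance. Qed.

Section Embeddings.
Variables (A : ULChain) (L : Lang).
Implicit Types M N B C : Struc A L.

Definition preserves_fint M N (h : dom M -> dom N) :=
  forall F a, h (fint (s:=M) (F:=F) a) = fint (s:=N) (fun i => h (a i)).

Definition preserves_pint M N (h : dom M -> dom N) :=
  forall P a, pint (s:=N) (P:=P) (fun i => h (a i)) = pint (s:=M) a.

Lemma teval_morph M N (h : dom M -> dom N) V (d : V -> dom M) t :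
  preserves_fint h -> teval (M:=N) (fun x => h (d x)) t = h (teval d t).
Proof.
move=> hF; elim: t => [v|F a IH] //=.
by rewrite hF; congr fint; apply: functional_extensionality => i; exact: IH.
Qed.

Lemma feval_morph M N (h : dom M -> dom N) V (d : V -> dom M) phi :
  preserves_fint h -> preserves_pint h ->
  feval (M:=N) (fun x => h (d x)) phi = feval d phi.
Proof.
move=> hF hP; elim: phi => //=; try by move=> p IHp q IHq; rewrite IHp IHq.
move=> P a; rewrite -(hP P (fun i => teval d (a i))).
by congr pint; apply: functional_extensionality => i; rewrite teval_morph.
Qed.

Lemma embedding_intro M N (h : dom M -> dom N) :
  injective h -> preserves_fint h -> preserves_pint h -> embedding h.
Proof. by move=> hi hF hP; do !split => //; move=> n phi d; exact: feval_morph. Qed.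

Lemma embedding_inj M N (h : dom M -> dom N) : embedding h -> injective h.
Proof. by case. Qed.

Lemma embedding_fint M N (h : dom M -> dom N) : embedding h -> preserves_fint h.
Proof. by case=> _ []. Qed.

Lemma embedding_pint M N (h : dom M -> dom N) : embedding h -> preserves_pint h.
Proof. by case=> _ [_ H] P a; exact: (H (parity P) (fatom (fun i => tvar L i)) a). Qed.

Lemma embedding_id M : embedding (fun x : dom M => x).
Proof. exact: embedding_intro. Qed.

Lemma embedding_comp M N C (h : dom M -> dom N) (k : dom N -> dom C) :
  embedding h -> embedding k -> embedding (fun x => k (h x)).
Proof.
move=> eh ek; apply: embedding_intro.
- by move=> x y /(embedding_inj ek) /(embedding_inj eh).
- by move=> F a; rewrite (embedding_fint eh) (embedding_fint ek).
- by move=> P a; rewrite (embedding_pint ek (fun i => h (a i))) (embedding_pint eh).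
Qed.

Lemma isomorphic_refl M : isomorphic M M.
Proof. by exists id; split; [exact: embedding_id | move=> y; exists y]. Qed.

Lemma isomorphic_trans M N C : isomorphic M N -> isomorphic N C -> isomorphic M C.
Proof.
case=> h [eh sh] [k [ek sk]]; exists (fun x => k (h x)).
split; first exact: embedding_comp.
by move=> z; case: (sk z) => y <-; case: (sh y) => x <-; exists x.
Qed.

Lemma isomorphic_sym M N : isomorphic M N -> isomorphic N M.
Proof.
case=> h [eh /choice [g hg]]; exists g; split; last first.
  by move=> x; exists (h x); apply: (embedding_inj eh); rewrite hg.
apply: embedding_intro.
- by move=> y1 y2 E; rewrite -(hg y1) -(hg y2) E.
- move=> F a; apply: (embedding_inj eh); rewrite hg (embedding_fint eh).
  by congr fint; apply: functional_extensionality => i; rewrite hg.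
- move=> P a; rewrite -(embedding_pint eh (fun i => g (a i))).
  by congr pint; apply: functional_extensionality => i; rewrite hg.
Qed.

Lemma embeds_of_isomorphic M N : isomorphic M N -> embeds M N.
Proof. by case=> h [eh _]; exists h. Qed.

Lemma embeds_trans M N C : embeds M N -> embeds N C -> embeds M C.
Proof. by case=> h eh [k ek]; exists (fun x => k (h x)); exact: embedding_comp. Qed.

Lemma embedding_val N (S : subuniverse N) :
  embedding (fun x : dom (induced S) => proj1_sig x).
Proof. by apply: embedding_intro => // x y; exact: sig_eq. Qed.

Lemma embedding_of_comp M N C (h : dom M -> dom N) (k : dom N -> dom C) :
  embedding k -> embedding (fun x => k (h x)) -> embedding h.
Proof.
move=> ek ekh; apply: embedding_intro.
- by move=> x y E; apply: (embedding_inj ekh); rewrite /= E.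
- by move=> F a; apply: (embedding_inj ek); rewrite (embedding_fint ekh) (embedding_fint ek).
- by move=> P a; rewrite -(embedding_pint ek) (embedding_pint ekh).
Qed.

Definition image_sub M N (h : dom M -> dom N) (eh : embedding h) : subuniverse N.
Proof.
refine (@MkSub A L N (fun y => exists x, h x = y) _).
move=> F a /choice [pre hpre]; exists (fint (s:=M) pre).
by rewrite (embedding_fint eh); congr fint; apply: functional_extensionality.
Defined.

Lemma isomorphic_image M N (h : dom M -> dom N) (eh : embedding h) :
  isomorphic M (induced (image_sub eh)).
Proof.
exists (fun x => exist (fun y => exists x, h x = y) (h x) (ex_intro _ x erefl)).
split; first exact: embedding_of_comp (embedding_val _) _.
by case=> y [x Hx]; exists x; exact: sig_eq.
Qed.

Lemma fin_gen_of_surj M N (h : dom M -> dom N) :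
  preserves_fint h -> FinFun.Surjective h -> fin_gen M -> fin_gen N.
Proof.
move=> hF sh [l Hl]; exists (List.map h l) => y S HS HX.
case: (sh y) => x <-; apply: (Hl x (fun x => S (h x))).
  by move=> F a Ha; rewrite hF; exact: HS.
by move=> z Hz; apply: HX; exact: List.in_map.
Qed.

Lemma fin_gen_isomorphic M N : isomorphic M N -> fin_gen M -> fin_gen N.
Proof. by case=> h [eh sh]; apply: fin_gen_of_surj sh; exact: embedding_fint. Qed.

Lemma Age_of_embeds M N : embeds M N -> fin_gen M -> Age N M.
Proof.
case=> h eh fgM; exists (image_sub eh); split; last exact: isomorphic_image.
exact: fin_gen_isomorphic (isomorphic_image eh) fgM.
Qed.

Lemma embeds_of_Age N B : Age N B -> embeds B N.
Proof.
case=> S [_ /embeds_of_isomorphic iBS]; apply: embeds_trans iBS _.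
by exists (fun x => proj1_sig x); exact: embedding_val.
Qed.

Lemma fin_gen_of_Age N B : Age N B -> fin_gen B.
Proof. by case=> S [fgS /isomorphic_sym SB]; exact: fin_gen_isomorphic SB fgS. Qed.

Lemma generated_fint N (X : dom N -> Prop) F (a : 'I_(farity F) -> dom N) :
  (forall i, generated X (a i)) -> generated X (fint (s:=N) a).
Proof. by move=> Ha S HS HX; apply: (HS) => i; exact: Ha i S HS HX. Qed.

Definition span N (X : dom N -> Prop) : subuniverse N :=
  @MkSub A L N (generated X) (@generated_fint N X).

Lemma generated_base N (X : dom N -> Prop) y : X y -> generated X y.
Proof. by move=> Xy S _; apply. Qed.

Lemma fin_gen_span N (l : list (dom N)) : fin_gen (induced (span (fun y => List.In y l))).
Proof.
pose X y := List.In y l.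
have lift_list r : (forall y, List.In y r -> generated X y) ->
    exists r' : list (dom (induced (span X))), List.map (@proj1_sig _ _) r' = r.
  elim: r => [|a r IH] Hr; first by exists nil.
  have [r' <-] := IH (fun y Hy => Hr y (or_intror Hy)).
  by exists (exist _ a (Hr a (or_introl erefl)) :: r').
have [l' El] := lift_list l (fun y Hy => generated_base Hy).
exists l' => -[v Hv] S HS Hl'.
(* Induction on [generated X v], for every membership proof at once. *)
pose P w := generated X w /\ forall Hw, S (exist (generated X) w Hw).
suff : P v by case=> _; apply.
apply: Hv => [F a Ha|y Hy].
  split; first by apply: generated_fint => i; case: (Ha i).
  move=> Hv'; pose b i := exist (generated X) (a i) (proj1 (Ha i)).
  have -> : exist _ (fint (s:=N) a) Hv' = fint (s:=induced (span X)) b by exact: sig_eq.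
  by apply: HS => i; exact: (proj2 (Ha i)).
split=> [|Hv']; first exact: generated_base.
rewrite -El in Hy; case/List.in_map_iff: Hy => z [Ez Hz].
by apply: Hl'; congr List.In: Hz; apply: sig_eq; rewrite Ez.
Qed.

Lemma embeds_into_span B N (h : dom B -> dom N) (l : list (dom B)) (X : dom N -> Prop) :
  embedding h -> (forall x, generated (fun y => List.In y l) x) ->
  (forall y, List.In y l -> X (h y)) -> embeds B (induced (span X)).
Proof.
move=> eh Hl HX.
have mem x : generated X (h x).
  apply: (Hl x (fun x => generated X (h x))) => [F a Ha|y Hy].
    by rewrite (embedding_fint eh); exact: generated_fint.
  by apply: generated_base; exact: HX.
exists (fun x => exist (generated X) (h x) (mem x)).
exact: embedding_of_comp (embedding_val _) _.
Qed.

End Embeddings.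

Section Ages.
Variables (A : ULChain) (L : Lang) (K : Struc A L -> Prop).
Implicit Types M N B C U : Struc A L.

Lemma embeds_of_same_class_Age N B : same_class K (Age N) -> K B -> embeds B N.
Proof.
case=> KAge _ /KAge [C [/embeds_of_Age CN /embeds_of_isomorphic BC]].
exact: embeds_trans BC CN.
Qed.

Lemma in_class_of_embeds N B :
  same_class K (Age N) -> embeds B N -> fin_gen B -> in_class K B.
Proof.
move=> [_ AgeK] BN fgB; case: (AgeK B (Age_of_embeds BN fgB)) => C [KC BC].
by exists C.
Qed.

Lemma HP_of_same_class_Age N : same_class K (Age N) -> HP K.
Proof.
move=> KN B KB S fgS; apply: (in_class_of_embeds KN _ fgS).
apply: embeds_trans (embeds_of_same_class_Age KN KB).
by exists (fun x => proj1_sig x); exact: embedding_val.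
Qed.

Lemma JEP_of_same_class_Age N :
  (forall B, K B -> fin_gen B) -> same_class K (Age N) -> JEP K.
Proof.
move=> Kfg KN B C KB KC.
have [[hB eB] [hC eC]] := (embeds_of_same_class_Age KN KB, embeds_of_same_class_Age KN KC).
have [[lB HB] [lC HC]] := (Kfg B KB, Kfg C KC).
pose X y := List.In y (List.map hB lB ++ List.map hC lC)%list.
have [D [KD /embeds_of_isomorphic XD]] : in_class K (induced (span X)).
  apply: (in_class_of_embeds KN _ (fin_gen_span _)).
  by exists (fun x => proj1_sig x); exact: embedding_val.
exists D; split=> //; split; apply: embeds_trans XD.
  by apply: (embeds_into_span eB HB) => y Hy; apply: List.in_or_app; left; exact: List.in_map.
by apply: (embeds_into_span eC HC) => y Hy; apply: List.in_or_app; right; exact: List.in_map.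
Qed.

Lemma same_class_Age_intro N :
  (forall B, K B -> fin_gen B) -> (forall B, K B -> embeds B N) ->
  (forall B, Age N B -> in_class K B) -> same_class K (Age N).
Proof.
move=> Kfg KN AgeK; split=> // B KB.
by exists B; split; [exact: Age_of_embeds (KN B KB) (Kfg B KB) | exact: isomorphic_refl].
Qed.

Lemma in_class_of_Age_HP U B : HP K -> K U -> Age U B -> in_class K B.
Proof.
move=> HPK KU [S [fgS BS]]; case: (HPK U KU S fgS) => C [KC SC].
by exists C; split=> //; exact: isomorphic_trans BS SC.
Qed.

End Ages.

Section DirectLimit.
Variables (A : ULChain) (L : Lang) (D : nat -> Struc A L).
Variable f : forall n, dom (D n) -> dom (D n.+1).
Hypothesis embedding_f : forall n, embedding (@f n).

Definition chain_elt := {n : nat & dom (D n)}.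

Definition chain_up (a : chain_elt) : chain_elt := existT _ (projT1 a).+1 (f (projT2 a)).

Definition chain_rel (a b : chain_elt) := exists i j, iter i chain_up a = iter j chain_up b.

Lemma chain_rel_refl a : chain_rel a a. Proof. by exists 0, 0. Qed.

Lemma chain_rel_sym a b : chain_rel a b -> chain_rel b a.
Proof. by case=> i [j H]; exists j, i. Qed.

Lemma chain_rel_trans a b c : chain_rel a b -> chain_rel b c -> chain_rel a c.
Proof.
case=> i [j H] [i' [j' H']]; exists (i' + i), (j + j').
by rewrite !iterD H -H' -!iterD addnC.
Qed.

Definition colim_car := {P : chain_elt -> Prop | exists a, P = chain_rel a}.

Definition colim_class (a : chain_elt) : colim_car := exist _ (chain_rel a) (ex_intro _ a erefl).

Lemma colim_class_eq a b : chain_rel a b -> colim_class a = colim_class b.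
Proof.
move=> ab; apply: sig_eq; apply: functional_extensionality => c.
apply: propositional_extensionality; split; last exact: chain_rel_trans.
exact: chain_rel_trans (chain_rel_sym ab).
Qed.

Lemma colim_class_rel a b : colim_class a = colim_class b -> chain_rel a b.
Proof.
move=> E; have : proj1_sig (colim_class b) b := chain_rel_refl b.
by rewrite -E.
Qed.

Definition colim_in m (y : dom (D m)) : colim_car := colim_class (existT _ m y).

Lemma colim_in_succ m (y : dom (D m)) : colim_in (f y) = colim_in y.
Proof. by apply: colim_class_eq; exists 0, 1. Qed.

Lemma chain_up_inj : injective chain_up.
Proof.
case=> m x [m' x'] E; have eq_m : m = m' by case: E.
subst m'; move: E; rewrite /chain_up /=.
move=> /(Eqdep_dec.inj_pair2_eq_dec _ PeanoNat.Nat.eq_dec _ _ _ _).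
by move/(embedding_inj (embedding_f m)) => ->.
Qed.

Lemma colim_in_inj m : injective (@colim_in m).
Proof.
have level i a : projT1 (iter i chain_up a) = i + projT1 a by elim: i => //= i ->.
move=> x y /colim_class_rel [i [j E]].
have eq_ij : i = j by move: (f_equal (@projT1 _ _) E); rewrite !level /= => /addIn.
move: E; rewrite -{}eq_ij; elim: i => [|i IH] /= E; last exact/IH/chain_up_inj.
exact: (Eqdep_dec.inj_pair2_eq_dec _ PeanoNat.Nat.eq_dec _ _ _ _ E).
Qed.

Fixpoint chain_lift k m : dom (D m) -> dom (D (k + m)) :=
  match k return dom (D m) -> dom (D (k + m)) with
  | 0 => id
  | k'.+1 => fun y => f (chain_lift k' y)
  end.

Lemma colim_in_lift k m (y : dom (D m)) : colim_in (chain_lift k y) = colim_in y.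
Proof. by elim: k => //= k IH; rewrite colim_in_succ. Qed.

Definition at_level (q : colim_car) m := exists y : dom (D m), colim_in y = q.

Lemma at_level_ex q : exists m, at_level q m.
Proof. by case: q => P [[m y] E]; exists m, y; exact: sig_eq. Qed.

Lemma at_level_mono q m M : m <= M -> at_level q m -> at_level q M.
Proof.
move=> le_mM [y <-]; rewrite -(subnK le_mM).
by exists (chain_lift (M - m) y); rewrite colim_in_lift.
Qed.

Lemma family_at_level k (a : 'I_k -> colim_car) m :
  (forall i, at_level (a i) m) -> exists ys : 'I_k -> dom (D m), forall i, colim_in (ys i) = a i.
Proof. exact: choice. Qed.

Lemma family_at_some_level k (a : 'I_k -> colim_car) :
  exists m (ys : 'I_k -> dom (D m)), forall i, colim_in (ys i) = a i.
Proof.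
have [lv Hlv] := choice _ (fun i => at_level_ex (a i)).
exists (\max_i lv i); apply: family_at_level => i.
by apply: at_level_mono (Hlv i); exact: leq_bigmax.
Qed.

Section Factor.
Variables (k : nat) (R : Type) (Phi : forall n, ('I_k -> dom (D n)) -> R).
Hypothesis Phi_succ : forall n (ys : 'I_k -> dom (D n)), Phi (fun i => f (ys i)) = Phi ys.

Lemma invariant_lift j m (ys : 'I_k -> dom (D m)) : Phi (fun i => chain_lift j (ys i)) = Phi ys.
Proof. by elim: j => //= j IH; rewrite Phi_succ. Qed.

Lemma invariant_mono m M (ys : 'I_k -> dom (D m)) (zs : 'I_k -> dom (D M)) :
  m <= M -> (forall i, colim_in (ys i) = colim_in (zs i)) -> Phi ys = Phi zs.
Proof.
move=> le_mM E; have [j eq_M] : exists j, M = j + m by exists (M - m); rewrite subnK.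
subst M; have -> : zs = fun i => chain_lift j (ys i).
  by apply: functional_extensionality => i; apply: colim_in_inj; rewrite colim_in_lift E.
by rewrite invariant_lift.
Qed.

Lemma invariant_wd m m' (ys : 'I_k -> dom (D m)) (ys' : 'I_k -> dom (D m')) :
  (forall i, colim_in (ys i) = colim_in (ys' i)) -> Phi ys = Phi ys'.
Proof.
move=> E; have [zs Ez] : exists zs : 'I_k -> dom (D (maxn m m')),
    forall i, colim_in (zs i) = colim_in (ys i).
  by apply: family_at_level => i; apply: (at_level_mono (leq_maxl m m')); exists (ys i).
rewrite (invariant_mono (leq_maxl m m') (fun i => esym (Ez i))).
by symmetry; apply: (invariant_mono (leq_maxr m m')) => i; rewrite Ez E.
Qed.

Lemma colim_factor_ex (a : 'I_k -> colim_car) :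
  exists r, exists m (ys : 'I_k -> dom (D m)), (forall i, colim_in (ys i) = a i) /\ r = Phi ys.
Proof. by have [m [ys E]] := family_at_some_level a; exists (Phi ys), m, ys. Qed.

Definition colim_factor (a : 'I_k -> colim_car) : R :=
  proj1_sig (constructive_indefinite_description _ (colim_factor_ex a)).

Lemma colim_factorE m (ys : 'I_k -> dom (D m)) :
  colim_factor (fun i => colim_in (ys i)) = Phi ys.
Proof.
rewrite /colim_factor; case: constructive_indefinite_description => r /= [m' [ys' [E ->]]].
exact: invariant_wd.
Qed.

End Factor.

Definition colim : Struc A L :=
  {| dom := colim_car;
     pint := fun P => colim_factor (fun n (ys : 'I_(parity P) -> dom (D n)) => pint ys);
     fint := fun F =>
       colim_factor (fun n (ys : 'I_(farity F) -> dom (D n)) => colim_in (fint ys)) |}.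

Lemma embedding_colim_in m : embedding (@colim_in m : dom (D m) -> dom colim).
Proof.
apply: embedding_intro; first exact: colim_in_inj.
- move=> F ys /=; rewrite colim_factorE // => n zs.
  by rewrite -(embedding_fint (embedding_f n)) colim_in_succ.
- move=> P ys /=; rewrite colim_factorE // => n zs.
  exact: (embedding_pint (embedding_f n)).
Qed.

Lemma embeds_stage_colim n : embeds (D n) colim.
Proof. by exists (@colim_in n); exact: embedding_colim_in. Qed.

Lemma at_level_fint m F (a : 'I_(farity F) -> colim_car) :
  (forall i, at_level (a i) m) -> at_level (fint (s:=colim) a) m.
Proof.
case/family_at_level => ys E.
have -> : a = (fun i => colim_in (ys i)) by apply: functional_extensionality => i; rewrite E.
by exists (fint ys); rewrite (embedding_fint (embedding_colim_in m)).
Qed.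

Lemma generated_at_level (l : list (dom colim)) :
  exists m, forall x, generated (fun y => List.In y l) x -> at_level x m.
Proof.
have [m Hm] : exists m, forall y, List.In y l -> at_level y m.
  elim: l => [|a l [m Hm]]; first by exists 0.
  have [m' Hm'] := at_level_ex a.
  exists (maxn m m') => y /= [<-|Hy]; first exact: at_level_mono (leq_maxr m m') Hm'.
  exact: at_level_mono (leq_maxl m m') (Hm y Hy).
exists m => x Hx; apply: (Hx (fun x => at_level x m)) => [F a|]; [exact: at_level_fint | exact: Hm].
Qed.

Lemma embeds_colim_fin_gen B : embeds B colim -> fin_gen B -> exists m, embeds B (D m).
Proof.
case=> h eh [l Hl]; have [m Hm] := generated_at_level (List.map h l).
have /choice [h' Eh'] : forall x, at_level (h x) m.
  move=> x; apply: Hm; apply: (Hl x (fun x => generated _ (h x))) => [F a Ha|y Hy].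
    by rewrite (embedding_fint eh); exact: generated_fint.
  by apply: generated_base; exact: List.in_map.
exists m, h'; apply: embedding_of_comp (embedding_colim_in m) _.
by have -> : (fun x => colim_in (h' x)) = h by exact: functional_extensionality.
Qed.

Lemma fin_gen_colim_stationary : fin_gen colim -> exists m, FinFun.Surjective (@f m).
Proof.
case=> l Hl; have [m Hm] := generated_at_level l; exists m => z.
have [y Ey] := Hm _ (Hl (colim_in z)); exists y.
by apply: colim_in_inj; rewrite colim_in_succ.
Qed.

Lemma in_class_colim (K : Struc A L -> Prop) :
  union_closed K -> (forall n, K (D n)) -> in_class K colim.
Proof.
move=> UC KD; apply: (UC _ nat (fun n => image_sub (embedding_colim_in n))).
- exact: inhabits 0.
- have sub i j : i <= j -> forall x, Defs.sub_mem (image_sub (embedding_colim_in i)) x ->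
      Defs.sub_mem (image_sub (embedding_colim_in j)) x.
    by move=> le_ij x; exact: at_level_mono.
  by move=> i j; case: (leqP i j) => [|/ltnW] /sub; [left | right].
- exact: at_level_ex.
- by move=> n; exists (D n); split; [exact: KD | exact/isomorphic_sym/isomorphic_image].
Qed.

End DirectLimit.

Section Construction.
Variables (A : ULChain) (L : Lang) (K : Struc A L -> Prop).
Implicit Types B C U X : Struc A L.

Lemma build_chain B0 (R : nat -> forall X Y, (dom X -> dom Y) -> Prop) :
  K B0 ->
  (forall n X, K X -> exists Y (h : dom X -> dom Y), [/\ K Y, embedding h & R n X Y h]) ->
  exists (D : nat -> Struc A L) (f : forall n, dom (D n) -> dom (D n.+1)),
    [/\ forall n, K (D n), forall n, embedding (f n) & forall n, R n (D n) (D n.+1) (f n)].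
Proof.
move=> KB0 step; pose KS := {X | K X}.
have next n (X : KS) :
    {Y : KS & {h : dom (proj1_sig X) -> dom (proj1_sig Y) | embedding h /\ R n _ _ h}}.
  case: X => X KX /=.
  have [Y HY] := constructive_indefinite_description _ (step n X KX).
  have [h [KY eh Rh]] := constructive_indefinite_description _ HY.
  by exists (exist _ Y KY), h.
pose Ds := nat_rect (fun _ => KS) (exist _ B0 KB0) (fun n (Z : KS) => projT1 (next n Z)).
exists (fun n => proj1_sig (Ds n)), (fun n => proj1_sig (projT2 (next n (Ds n)))).
split=> n; first exact: proj2_sig (Ds n).
  exact: proj1 (proj2_sig (projT2 (next n (Ds n)))).
exact: proj2 (proj2_sig (projT2 (next n (Ds n)))).
Qed.

Lemma enum_of_countable_class :
  (exists B, K B) -> countable_class K ->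
  exists c : nat -> Struc A L, (forall n, K (c n)) /\ forall B, K B -> exists n, isomorphic B (c n).
Proof.
move=> [B0 KB0] [e He].
have /choice [c Hc] : forall n, exists C,
    K C /\ forall B, K B -> isomorphic B (e n) -> isomorphic B C.
  move=> n; case: (classic (exists B, K B /\ isomorphic B (e n))) => [[B [KB Be]]|noB].
    by exists B; split=> // B' _ B'e; exact: isomorphic_trans B'e (isomorphic_sym Be).
  by exists B0; split=> // B' KB' B'e; case: noB; exists B'.
exists c; split=> [n|B KB]; first by case: (Hc n).
by have [n Ben] := He B KB; exists n; exact: (proj2 (Hc n)) B KB Ben.
Qed.

Lemma proper_extension_of_JEP X :
  JEP K -> K X -> ~ (forall B, K B -> embeds B X) ->
  exists Y (h : dom X -> dom Y), [/\ K Y, embedding h & ~ FinFun.Surjective h].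
Proof.
move=> JEPK KX not_univ.
have [B not_BX] := not_all_ex_not _ _ not_univ.
have [KB BX] := imply_to_and _ _ not_BX.
have [Y [KY [[h eh] [k ek]]]] := JEPK X B KX KB.
exists Y, h; split=> // onto; apply: BX.
have [h' [eh' _]] : isomorphic Y X by apply: isomorphic_sym; exists h.
by exists (fun b => h' (k b)); exact: embedding_comp.
Qed.

Lemma Age_colim_in_class (D : nat -> Struc A L) (f : forall n, dom (D n) -> dom (D n.+1)) :
  (forall n, embedding (f n)) -> HP K -> (forall n, K (D n)) ->
  forall B, Age (colim f) B -> in_class K B.
Proof.
move=> ef HPK KD B AB; have fgB := fin_gen_of_Age AB.
have [m BDm] := embeds_colim_fin_gen ef (embeds_of_Age AB) fgB.
exact: in_class_of_Age_HP HPK (KD m) (Age_of_embeds BDm fgB).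
Qed.

Lemma Age_of_HP_JEP_countable :
  (forall B, K B -> fin_gen B) -> (exists B, K B) -> countable_class K ->
  HP K -> JEP K -> exists N, same_class K (Age N).
Proof.
move=> Kfg [B0 KB0] cK HPK JEPK.
have [c [Kc c_enum]] := enum_of_countable_class (ex_intro _ B0 KB0) cK.
have step n X : K X -> exists Y (h : dom X -> dom Y), [/\ K Y, embedding h & embeds (c n) Y].
  move=> KX; have [Y [KY [[h eh] cY]]] := JEPK X (c n) KX (Kc n).
  by exists Y, h.
have [D [f [KD ef cD]]] := build_chain (R := fun n _ Y _ => embeds (c n) Y) KB0 step.
exists (colim f); apply: same_class_Age_intro => // [B KB|]; last exact: Age_colim_in_class.
have [n /embeds_of_isomorphic Bc] := c_enum B KB.
exact: embeds_trans Bc (embeds_trans (cD n) (embeds_stage_colim ef n.+1)).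
Qed.

Lemma Age_of_HP_JEP_union_closed :
  (forall B, K B -> fin_gen B) -> (exists B, K B) -> HP K -> JEP K -> union_closed K ->
  exists N, same_class K (Age N).
Proof.
move=> Kfg [B0 KB0] HPK JEPK UC.
case: (classic (exists U, K U /\ forall B, K B -> embeds B U)) => [[U [KU U_univ]]|no_univ].
  by exists U; apply: same_class_Age_intro => // B; exact: in_class_of_Age_HP HPK KU.
have step (n : nat) X : K X ->
    exists Y (h : dom X -> dom Y), [/\ K Y, embedding h & ~ FinFun.Surjective h].
  by move=> KX; apply: (proper_extension_of_JEP JEPK KX) => univ; apply: no_univ; exists X.
have [D [f [KD ef not_onto]]] :=
  build_chain (R := fun _ _ _ h => ~ FinFun.Surjective h) KB0 step.
have [C [KC /isomorphic_sym CD]] := in_class_colim ef UC KD.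
have [m onto] := fin_gen_colim_stationary ef (fin_gen_isomorphic CD (Kfg C KC)).
by case: (not_onto m onto).
Qed.

End Construction.

Theorem theorem1 (A : ULChain) (L : Lang) :
  (forall K : Struc A L -> Prop,
      (forall B, K B -> fin_gen B) ->
      (exists B, K B) ->
      countable_class K ->
      ((exists N : Struc A L, same_class K (Age N)) <-> (HP K /\ JEP K)))
  /\
  (forall K : Struc A L -> Prop,
      (forall B, K B -> fin_gen B) ->
      (exists B, K B) ->
      HP K -> JEP K -> union_closed K ->
      exists N : Struc A L, same_class K (Age N)).
Proof.
split=> K Kfg neK; last exact: Age_of_HP_JEP_union_closed.
move=> cK; split=> [[N KN]|[HPK JEPK]]; last exact: Age_of_HP_JEP_countable.
by split; [exact: HP_of_same_class_Age KN | exact: JEP_of_same_class_Age Kfg KN].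
Qed.
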